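(* Let $\mathcal{A}$ be the automaton whose set of states is $$S=\Big\{\pm\sum_{i=0}^3c_i\alpha^i : c_i\in\{0,1\},\ c_0c_1c_2c_3\neq1111\Big\}\cup\{\pm(\alpha^{-1}+1+\alpha^2),\ \pm(\alpha^{-2}+\alpha^{-1}+\alpha),\ \pm(\alpha^{-3}+\alpha^{-2}+1+\alpha^3)\},$$ whose edges are the triples $(s,(a,b),t)\in S\times\{0,1\}^2\times S$ with $t=\frac{s}{\alpha}+(a-b)\alpha^3$, and whose initial state is $0$. Say that a sequence $(a_n,b_n)_{n\ge l}$ in $\{0,1\}^2$ is an infinite path of $\mathcal{A}$ beginning in the initial state if there are states $(e_n)_{n\ge l}$ in $S$ with $e_l=0$ and $(e_n,(a_n,b_n),e_{n+1})$ an edge for all $n\ge l$. Then for all $(\varepsilon_i)_{i\ge l}$ and $(\varepsilon'_i)_{i\ge l}$ in $\mathcal{D}^\infty$, the following are equivalent: (1) $\sum_{i\ge l}\varepsilon_i\alpha^i=\sum_{i\ge l}\varepsilon'_i\alpha^i$; (2) $(\varepsilon_i,\varepsilon'_i)_{i\ge l}$ is an infinite path in $\mathcal{A}$ beginning in the initial state.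
   Context: Let $P(x)=x^4-x^3-x^2-x-1$. Its roots are $\beta=\beta_1\approx 1.9275$, a real root $\beta_2\approx-0.7748$, and a pair of complex conjugate roots $\beta_3\approx-0.0763+0.8147i$ and $\overline{\beta_3}$. For $i\in\mathbb{Z}$ put $\alpha^i=(\beta_2^i,\beta_3^i)\in\mathbb{R}\times\mathbb{C}$, with $\alpha^0=1=(1,1)$; arithmetic in $\mathbb{R}\times\mathbb{C}$ is componentwise and an integer $n$ is identified with $(n,n)$. Let $\mathcal{D}^\infty$ be the set of sequences $(\varepsilon_i)_{i\ge l}$, $l\in\mathbb{Z}$, with $\varepsilon_i\in\{0,1\}$ and containing no four consecutive $1$'s. *)

From Stdlib Require Import Reals ZArith List.
Import ListNotations.
From Coquelicot Require Import Coquelicot.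
Open Scope R_scope.

Definition PR (x : R) : R := x^4 - x^3 - x^2 - x - 1.
Definition PC (z : C) : C :=
  (Cpow z 4 - Cpow z 3 - Cpow z 2 - z - 1)%C.

Definition zpowC (z : C) (k : Z) : C :=
  match k with
  | Z0 => 1%C
  | Zpos p => Cpow z (Pos.to_nat p)
  | Zneg p => Cpow (Cinv z) (Pos.to_nat p)
  end.

(* elements of R x C; alpha^k = (b2^k, b3^k) *)
Definition RC := (R * C)%type.
Definition alz (b2 : R) (b3 : C) (k : Z) : RC := (powerRZ b2 k, zpowC b3 k).
Definition RCadd (x y : RC) : RC := (fst x + fst y, (snd x + snd y)%C).
Definition RCopp (x : RC) : RC := (- fst x, (- snd x)%C).
Definition RCscal (n : Z) (x : RC) : RC := (IZR n * fst x, (RtoC (IZR n) * snd x)%C).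
Definition RC0 : RC := (0%R, RtoC 0).

Definition b2Z (b : bool) : Z := if b then 1%Z else 0%Z.

Definition alsum (b2 : R) (b3 : C) (ks : list Z) : RC :=
  List.fold_right (fun k acc => RCadd (alz b2 b3 k) acc) RC0 ks.

Definition inS (b2 : R) (b3 : C) (s : RC) : Prop :=
  (exists (c0 c1 c2 c3 : bool),
      ~ (c0 = true /\ c1 = true /\ c2 = true /\ c3 = true) /\
      let v := RCadd (RCscal (b2Z c0) (alz b2 b3 0))
               (RCadd (RCscal (b2Z c1) (alz b2 b3 1))
               (RCadd (RCscal (b2Z c2) (alz b2 b3 2))
                      (RCscal (b2Z c3) (alz b2 b3 3)))) in
      (s = v \/ s = RCopp v))
  \/ (exists ks : list Z,
      (ks = (-1 :: 0 :: 2 :: nil)%Z \/ ks = (-2 :: -1 :: 1 :: nil)%Z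
       \/ ks = (-3 :: -2 :: 0 :: 3 :: nil)%Z) /\
      (s = alsum b2 b3 ks \/ s = RCopp (alsum b2 b3 ks))).

Definition edge_target (b2 : R) (b3 : C) (s : RC) (a b : bool) : RC :=
  RCadd (fst s / b2, (snd s / b3)%C) (RCscal (b2Z a - b2Z b) (alz b2 b3 3)).

(* (a_n, b_n)_{n >= l}, encoded as functions on nat with index n <-> l + n,
   is an infinite path of the automaton beginning in the initial state 0 *)
Definition infinite_path (b2 : R) (b3 : C) (a b : nat -> bool) : Prop :=
  exists e : nat -> RC,
    e O = RC0 /\
    forall n, inS b2 b3 (e n) /\ inS b2 b3 (e (S n)) /\
              e (S n) = edge_target b2 b3 (e n) (a n) (b n).

(* D^infinity: 0/1 sequences (index n <-> l + n) with no four consecutive 1s *)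
Definition inDinf (eps : nat -> bool) : Prop :=
  forall n, ~ (eps n = true /\ eps (S n) = true /\ eps (S (S n)) = true
               /\ eps (S (S (S n))) = true).

(* the value sum_{i >= l} eps_i alpha^i in R x C (componentwise series;
   the C-component is summed via its real and imaginary parts) *)
Definition alpha_value (b2 : R) (b3 : C) (l : Z) (eps : nat -> bool) : RC :=
  let term := fun n : nat => RCscal (b2Z (eps n)) (alz b2 b3 (l + Z.of_nat n)%Z) in
  (Series (fun n => fst (term n)),
   (Series (fun n => Re (snd (term n))), Series (fun n => Im (snd (term n))))).

From Stdlib Require Import Reals Lra Lia Psatz ZArith List Bool.
From Coquelicot Require Import Coquelicot.
Import ListNotations.
Open Scope R_scope.

(* Let α be a root of P(X) = X^4 - X^3 - X^2 - X - 1 and d_i = ε_(l+i) - ε'_(l+i).  Along any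
   path the states are forced: e_n = α^(4-n) (d_0 + d_1 α + ... + d_(n-1) α^(n-1)), an element of
   Z[α] = Z + Zα + Zα^2 + Zα^3.  Its images under α |-> β2 and α |-> β3, both of modulus < 1,
   control the series Σ d_i α^i:
   - if all e_n lie in the finite set S, these images are bounded, so the partial sums tend to 0
     at β2 and β3 and the two expansions have the same value;
   - conversely, if the values agree, the tails of the series bound e_n by ρ^4 / (1 - ρ) at both
     conjugates, while at the Perron root β admissibility gives |d_0 + ... + d_(n-1) β^(n-1)| < β^n,
     so e_n is never ±α^4.  A finite computation, with interval enclosures of β2 and β3, shows
     that each successor of a state of S either lies in S or necessarily violates one of these
     constraints within eight further steps. *)

Lemma PR_sub b c : PR b - PR c =
  (b - c) * (b^3 + (c - 1) * b^2 + (c^2 - c - 1) * b + (c^3 - c^2 - c - 1)).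
Proof. unfold PR; ring. Qed.

Lemma PR_neg_root_sep b c : PR b = 0 -> b < 0 -> c < 0 ->
  0 < c^2 - c - 1 -> c^3 - c^2 - c - 1 < 0 -> 0 <= (b - c) * PR c.
Proof.
  intros Hb Hb0 Hc0 Hc2 Hc3.
  assert (Hq : b^3 + (c - 1) * b^2 + (c^2 - c - 1) * b + (c^3 - c^2 - c - 1) < 0).
  { assert (0 < b^2) by nra.
    assert (b^3 < 0) by (replace (b^3) with (b * b^2) by ring; nra).
    assert ((c - 1) * b^2 < 0) by nra.
    assert ((c^2 - c - 1) * b < 0) by nra. lra. }
  pose proof (PR_sub b c) as E. rewrite Hb in E.
  set (Q := b^3 + (c - 1) * b^2 + (c^2 - c - 1) * b + (c^3 - c^2 - c - 1)) in *.
  replace (PR c) with (- ((b - c) * Q)) by lra.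
  assert (0 <= (b - c)^2) by apply pow2_ge_0. nra.
Qed.

Lemma beta2_enclosure b2 : PR b2 = 0 -> b2 < 0 ->
  -774804113216 / 1000000000000 < b2 < -774804113215 / 1000000000000.
Proof.
  intros H H0. split.
  - pose proof (PR_neg_root_sep b2 (-774804113216 / 1000000000000) H H0) as S.
    assert (P : 0 < PR (-774804113216 / 1000000000000)) by (unfold PR; lra).
    assert (b2 <> -774804113216 / 1000000000000) by (intros ->; lra).
    nra.
  - pose proof (PR_neg_root_sep b2 (-774804113215 / 1000000000000) H H0) as S.
    assert (P : PR (-774804113215 / 1000000000000) < 0) by (unfold PR; lra).
    assert (b2 <> -774804113215 / 1000000000000) by (intros ->; lra).
    nra.
Qed.

Lemma beta_exists : { s : R | 1927561975482 / 1000000000000 <= s <= 1927561975483 / 1000000000000 /\ PR s = 0 }.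
Proof.
  destruct (IVT PR (1927561975482 / 1000000000000) (1927561975483 / 1000000000000)) as [s Hs].
  - intro x. unfold PR. reg.
  - lra.
  - unfold PR; lra.
  - unfold PR; lra.
  - exists s; exact Hs.
Qed.

Lemma Cmult_reg_r (a b z : C) : z <> 0%C -> (a * z = b * z)%C -> a = b.
Proof.
  intros Hz E.
  replace a with (a * z / z)%C by (field; exact Hz).
  rewrite E. field. exact Hz.
Qed.

Definition cofactor_q (r s : R) : R := r^2 + r * s + s^2 - r - s - 1.

Lemma PC_factor r s z : PR r = 0 -> PR s = 0 -> r <> s ->
  PC z = ((z - RtoC r) * (z - RtoC s) * (z * z + RtoC (r + s - 1) * z + RtoC (cofactor_q r s)))%C.
Proof.
  intros Hr Hs Hrs.
  (* the remainder u X + v of P modulo (X - r)(X - s) vanishes at r and at s *)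
  set (u := -1 - (r * s * (r + s - 1) - (r + s) * cofactor_q r s)).
  set (v := -1 - r * s * cofactor_q r s).
  assert (Er : PR r = u * r + v) by (unfold PR, u, v, cofactor_q; ring).
  assert (Es : PR s = u * s + v) by (unfold PR, u, v, cofactor_q; ring).
  assert (Hu : u = 0).
  { apply (Rmult_eq_reg_l (r - s)); [|lra]. rewrite Rmult_0_r. lra. }
  assert (Hv : v = 0) by (rewrite Hu in Er; lra).
  transitivity ((z - RtoC r) * (z - RtoC s) * (z * z + RtoC (r + s - 1) * z + RtoC (cofactor_q r s))
    + RtoC u * z + RtoC v)%C.
  - unfold PC, u, v, cofactor_q. repeat rewrite ?RtoC_minus, ?RtoC_plus, ?RtoC_mult, ?RtoC_pow.
    ring.
  - rewrite Hu, Hv. ring.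
Qed.

Lemma PC_root_Vieta r s x y : PR r = 0 -> PR s = 0 -> r < 0 -> 0 < s ->
  PC (x, y) = 0%C -> 0 < y ->
  x = (1 - r - s) / 2 /\ (x^2 + y^2) * (r * s) = -1.
Proof.
  intros Hr Hs Hr0 Hs0 Hz Hy.
  set (z := (x, y) : C) in *.
  rewrite (PC_factor r s z Hr Hs ltac:(lra)) in Hz.
  assert (Hlin : forall t : R, (z - RtoC t)%C <> 0%C)
    by (intros t E; apply (f_equal snd) in E; simpl in E; lra).
  assert (Q : (z * z + RtoC (r + s - 1) * z + RtoC (cofactor_q r s))%C = 0%C).
  { apply (Cmult_reg_r _ _ ((z - RtoC r) * (z - RtoC s))); [apply Cmult_neq_0; apply Hlin|].
    rewrite Cmult_0_l, <- Hz. ring. }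
  pose proof (f_equal fst Q) as Re0. pose proof (f_equal snd Q) as Im0.
  simpl in Re0, Im0.
  assert (Hx : x = (1 - r - s) / 2) by nra.
  split; [exact Hx|].
  assert (Hq : cofactor_q r s = x^2 + y^2) by (rewrite Hx in Re0 |- *; nra).
  rewrite <- Hq. unfold cofactor_q, PR in *. nra.
Qed.

Definition scale : Z := 1000000000000.
Definition enclosed (I : Z * Z) (m : R) : Prop := IZR (fst I) <= m * IZR scale <= IZR (snd I).

(* Enclosures, scaled by [scale], of r^k, Re (z^k) and Im (z^k) / y for k = 1, 2, 3, and of y^2,
   where r = β2 and z = x + iy = β3. *)
Definition I_r : Z * Z := (-774804113216, -774804113215)%Z.
Definition I_r2 : Z * Z := (600321413854, 600321413857)%Z.
Definition I_r3 : Z * Z := (-465131500708, -465131500705)%Z.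
Definition I_re1 : Z * Z := (-76378931134, -76378931133)%Z.
Definition I_re2 : Z * Z := (-657908291593, -657908291591)%Z.
Definition I_re3 : Z * Z := (151642146108, 151642146111)%Z.
Definition I_im2 : Z * Z := (-152757862268, -152757862266)%Z.
Definition I_im3 : Z * Z := (-646240809351, -646240809348)%Z.
Definition I_y2 : Z * Z := (663742032712, 663742032714)%Z.

Record conj_enclosure (r x y : R) : Prop := {
  enc_r : enclosed I_r r;
  enc_r2 : enclosed I_r2 (r^2);
  enc_r3 : enclosed I_r3 (r^3);
  enc_re1 : enclosed I_re1 x;
  enc_re2 : enclosed I_re2 (x^2 - y^2);
  enc_re3 : enclosed I_re3 (x^3 - 3*x*y^2);
  enc_im2 : enclosed I_im2 (2*x);
  enc_im3 : enclosed I_im3 (3*x^2 - y^2);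
  enc_y2 : enclosed I_y2 (y^2) }.

Lemma conj_enclosure_of_Vieta r s x y :
  -774804113216 / 1000000000000 < r < -774804113215 / 1000000000000 ->
  1927561975482 / 1000000000000 <= s <= 1927561975483 / 1000000000000 ->
  x = (1 - r - s) / 2 -> (x^2 + y^2) * (r * s) = -1 -> conj_enclosure r x y.
Proof.
  intros Hr Hs Hx Hq.
  assert (Hx' : -76378931134 / 1000000000000 <= x <= -76378931133 / 1000000000000) by lra.
  assert (Hm : -1493482947082987 / 10^15 <= r*s <= -1493482947080284 / 10^15) by (split; nra).
  assert (0 < x^2 + y^2) by nra.
  assert (Hq' : 669575773833347 / 10^15 <= x^2 + y^2 <= 669575773834560 / 10^15) by (split; nra).
  assert (Hxx : 5833741121019 / 10^15 <= x^2 <= 5833741121173 / 10^15) by (split; nra).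
  assert (Hyy : 663742032712174 / 10^15 <= y^2 <= 663742032713541 / 10^15) by lra.
  assert (Hx3 : -445574911348 / 10^15 <= x^3 <= -445574911330 / 10^15) by (split; nra).
  assert (Hxy : -50695907007369 / 10^15 <= x * y^2 <= -50695907006600 / 10^15) by (split; nra).
  assert (Hr2 : 600321413854882 / 10^15 <= r^2 <= 600321413856433 / 10^15) by (split; nra).
  assert (Hr3 : -465131500707609 / 10^15 <= r^3 <= -465131500705806 / 10^15) by (split; nra).
  constructor; cbv [enclosed scale fst snd I_r I_r2 I_r3 I_re1 I_re2 I_re3 I_im2 I_im3 I_y2]; lra.
Qed.

Lemma conj_enclosure_Rabs r x y : conj_enclosure r x y ->
  7/10 <= Rabs r <= 774804113216 / 1000000000000.
Proof.
  intros [Hr _ _ _ _ _ _ _ _]. revert Hr.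
  cbv [enclosed scale fst snd I_r]. intro. rewrite Rabs_left; lra.
Qed.

Lemma conj_enclosure_Cmod r x y : conj_enclosure r x y ->
  7/10 <= Cmod (x, y) <= 818276098781 / 1000000000000.
Proof.
  intros [_ _ _ Hx _ _ _ _ Hy]. revert Hx Hy.
  cbv [enclosed scale fst snd I_re1 I_y2]. intros Hx Hy.
  assert (E : Cmod (x, y) ^ 2 = x^2 + y^2) by (rewrite Cmod2_alt; reflexivity).
  pose proof (Cmod_ge_0 (x, y)).
  assert (x^2 <= 76378931134^2 / 1000000000000^2) by nra.
  split; nra.
Qed.

(* [Zalpha a b c d] stands for a + bα + cα^2 + dα^3. *)
Inductive zalpha := Zalpha (a b c d : Z).

Definition za_eqb (v w : zalpha) : bool :=
  match v, w with
  | Zalpha a b c d, Zalpha a' b' c' d' => (a =? a') && (b =? b') && (c =? c') && (d =? d')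
  end%Z.

Lemma za_eqb_eq v w : za_eqb v w = true -> v = w.
Proof.
  destruct v, w; simpl. rewrite !andb_true_iff, !Z.eqb_eq.
  intros [[[-> ->] ->] ->]. reflexivity.
Qed.

Definition za_zero : zalpha := Zalpha 0 0 0 0.
Definition za_one : zalpha := Zalpha 1 0 0 0.
Definition za_add (v w : zalpha) : zalpha :=
  match v, w with
  | Zalpha a b c d, Zalpha a' b' c' d' => Zalpha (a + a') (b + b') (c + c') (d + d')
  end.
Definition za_opp (v : zalpha) : zalpha :=
  match v with Zalpha a b c d => Zalpha (- a) (- b) (- c) (- d) end.

(* Multiplication by α uses α^4 = 1 + α + α^2 + α^3. *)
Definition za_mul_alpha (v : zalpha) : zalpha :=
  match v with Zalpha a b c d => Zalpha d (a + d) (b + d) (c + d) end.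

(* The transition v |-> v / α + e α^3 of the automaton, using 1 / α = α^3 - α^2 - α - 1. *)
Definition za_shift (v : zalpha) (e : Z) : zalpha :=
  match v with Zalpha a b c d => Zalpha (b - a) (c - a) (d - a) (a + e) end.

Definition za_pow (k : Z) : zalpha :=
  match k with
  | Z0 => za_one
  | Zpos p => Nat.iter (Pos.to_nat p) za_mul_alpha za_one
  | Zneg p => Nat.iter (Pos.to_nat p) (fun v => za_shift v 0) za_one
  end.

Definition za_evalR (r : R) (v : zalpha) : R :=
  match v with Zalpha a b c d => IZR a + IZR b * r + IZR c * r^2 + IZR d * r^3 end.

Definition za_evalC (z : C) (v : zalpha) : C :=
  match v with
  | Zalpha a b c d =>
      (RtoC (IZR a) + RtoC (IZR b) * z + RtoC (IZR c) * Cpow z 2 + RtoC (IZR d) * Cpow z 3)%C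
  end.

Definition za_embed (b2 : R) (b3 : C) (v : zalpha) : RC := (za_evalR b2 v, za_evalC b3 v).

Lemma za_evalR_shift r v e : PR r = 0 -> za_evalR r (za_shift v e) * r = za_evalR r v + IZR e * r^4.
Proof.
  intro H. destruct v as [a b c d]. simpl za_shift. simpl za_evalR.
  rewrite !minus_IZR, !plus_IZR.
  assert (E : (IZR b - IZR a + (IZR c - IZR a) * r + (IZR d - IZR a) * r^2 + (IZR a + IZR e) * r^3) * r
    - (IZR a + IZR b * r + IZR c * r^2 + IZR d * r^3 + IZR e * r^4) = IZR a * PR r) by (unfold PR; ring).
  rewrite H in E. lra.
Qed.

Lemma za_evalC_shift z v e : PC z = 0%C ->
  (za_evalC z (za_shift v e) * z = za_evalC z v + RtoC (IZR e) * Cpow z 4)%C.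
Proof.
  intro H. destruct v as [a b c d]. unfold za_evalC, za_shift.
  rewrite !minus_IZR, !plus_IZR, !RtoC_minus, !RtoC_plus.
  transitivity (RtoC (IZR a) + RtoC (IZR b) * z + RtoC (IZR c) * Cpow z 2 + RtoC (IZR d) * Cpow z 3
    + RtoC (IZR e) * Cpow z 4 + RtoC (IZR a) * PC z)%C.
  - unfold PC. simpl. ring.
  - rewrite H. ring.
Qed.

Lemma za_evalR_mul_alpha r v : PR r = 0 -> za_evalR r (za_mul_alpha v) = r * za_evalR r v.
Proof.
  intro H. destruct v as [a b c d]. simpl za_mul_alpha. simpl za_evalR. rewrite !plus_IZR.
  assert (E : IZR d + (IZR a + IZR d) * r + (IZR b + IZR d) * r^2 + (IZR c + IZR d) * r^3
    - r * (IZR a + IZR b * r + IZR c * r^2 + IZR d * r^3) = - IZR d * PR r) by (unfold PR; ring).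
  rewrite H in E. lra.
Qed.

Lemma za_evalC_mul_alpha z v : PC z = 0%C -> za_evalC z (za_mul_alpha v) = (z * za_evalC z v)%C.
Proof.
  intro H. destruct v as [a b c d]. unfold za_evalC, za_mul_alpha. rewrite !plus_IZR, !RtoC_plus.
  transitivity (z * (RtoC (IZR a) + RtoC (IZR b) * z + RtoC (IZR c) * Cpow z 2 + RtoC (IZR d) * Cpow z 3)
    - RtoC (IZR d) * PC z)%C.
  - unfold PC. simpl. ring.
  - rewrite H. ring.
Qed.

Lemma za_evalR_pow r k : PR r = 0 -> r <> 0 -> za_evalR r (za_pow k) = powerRZ r k.
Proof.
  intros H Hr. destruct k as [|p|p]; simpl.
  - ring.
  - induction (Pos.to_nat p) as [|n IH]; simpl.
    + ring.
    + rewrite za_evalR_mul_alpha, IH by exact H. ring.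
  - induction (Pos.to_nat p) as [|n IH]; simpl.
    + field.
    + apply (Rmult_eq_reg_r r); [|exact Hr].
      rewrite za_evalR_shift, IH by exact H. field. split; [|exact Hr]. apply pow_nonzero, Hr.
Qed.

Lemma za_evalC_pow z k : PC z = 0%C -> z <> 0%C -> za_evalC z (za_pow k) = zpowC z k.
Proof.
  intros H Hz. assert (One : za_evalC z za_one = 1%C) by (unfold za_evalC; simpl; ring).
  destruct k as [|p|p]; unfold za_pow, zpowC.
  - exact One.
  - induction (Pos.to_nat p) as [|n IH]; simpl Nat.iter; simpl Cpow.
    + exact One.
    + rewrite za_evalC_mul_alpha, IH by exact H. reflexivity.
  - induction (Pos.to_nat p) as [|n IH]; simpl Nat.iter; simpl Cpow.
    + exact One.
    + rewrite <- IH. apply (Cmult_reg_r _ _ z Hz).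
      rewrite za_evalC_shift by exact H. field. exact Hz.
Qed.

Lemma za_embed_zero b2 b3 : za_embed b2 b3 za_zero = RC0.
Proof. unfold za_embed, RC0. simpl. f_equal; [ring|]. unfold za_evalC. ring. Qed.

Lemma za_embed_add b2 b3 v w : za_embed b2 b3 (za_add v w) = RCadd (za_embed b2 b3 v) (za_embed b2 b3 w).
Proof.
  destruct v, w. unfold za_embed, RCadd. simpl.
  rewrite !plus_IZR. f_equal; [ring|]. unfold za_evalC. rewrite !RtoC_plus. ring.
Qed.

Lemma za_embed_opp b2 b3 v : za_embed b2 b3 (za_opp v) = RCopp (za_embed b2 b3 v).
Proof.
  destruct v. unfold za_embed, RCopp. simpl.
  rewrite !opp_IZR. f_equal; [ring|]. unfold za_evalC. rewrite !RtoC_opp. ring.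
Qed.

Lemma za_embed_shift b2 b3 v a b : PR b2 = 0 -> b2 <> 0 -> PC b3 = 0%C -> b3 <> 0%C ->
  za_embed b2 b3 (za_shift v (b2Z a - b2Z b)) = edge_target b2 b3 (za_embed b2 b3 v) a b.
Proof.
  intros H2 H2' H3 H3'. unfold za_embed, edge_target, RCadd, RCscal, alz. cbn [fst snd]. f_equal.
  - apply (Rmult_eq_reg_r b2); [|exact H2'].
    rewrite za_evalR_shift by exact H2. simpl powerRZ. field. exact H2'.
  - apply (Cmult_reg_r _ _ b3 H3').
    rewrite za_evalC_shift by exact H3. simpl zpowC. field. exact H3'.
Qed.

Definition digit_tuples : list (bool * bool * bool * bool) :=
  flat_map (fun c0 => flat_map (fun c1 => flat_map (fun c2 =>
    map (fun c3 => (c0, c1, c2, c3)) [false; true]) [false; true]) [false; true]) [false; true].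

Definition not_all_ones (c : bool * bool * bool * bool) : bool :=
  match c with (true, true, true, true) => false | _ => true end.

Definition digit_vector (c : bool * bool * bool * bool) : zalpha :=
  match c with (c0, c1, c2, c3) => Zalpha (b2Z c0) (b2Z c1) (b2Z c2) (b2Z c3) end.

Definition za_sum (ks : list Z) : zalpha := fold_right (fun k v => za_add (za_pow k) v) za_zero ks.

Definition extra_exponents : list (list Z) := [[-1; 0; 2]; [-2; -1; 1]; [-3; -2; 0; 3]]%Z.

Definition state_list : list zalpha :=
  let D := map digit_vector (filter not_all_ones digit_tuples) in
  let E := map za_sum extra_exponents in
  D ++ map za_opp D ++ E ++ map za_opp E.

Lemma za_embed_digit_vector b2 b3 c0 c1 c2 c3 :
  za_embed b2 b3 (digit_vector (c0, c1, c2, c3)) =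
  RCadd (RCscal (b2Z c0) (alz b2 b3 0))
   (RCadd (RCscal (b2Z c1) (alz b2 b3 1))
   (RCadd (RCscal (b2Z c2) (alz b2 b3 2))
          (RCscal (b2Z c3) (alz b2 b3 3)))).
Proof.
  unfold za_embed, RCadd, RCscal, alz, digit_vector, za_evalR, za_evalC. simpl. f_equal; ring.
Qed.

Lemma za_embed_sum b2 b3 ks : PR b2 = 0 -> b2 <> 0 -> PC b3 = 0%C -> b3 <> 0%C ->
  za_embed b2 b3 (za_sum ks) = alsum b2 b3 ks.
Proof.
  intros H2 H2' H3 H3'. induction ks as [|k ks IH]; simpl.
  - apply za_embed_zero.
  - rewrite za_embed_add, IH. unfold za_embed, alz.
    rewrite za_evalR_pow, za_evalC_pow by assumption. reflexivity.
Qed.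

Lemma state_list_inS b2 b3 v : PR b2 = 0 -> b2 <> 0 -> PC b3 = 0%C -> b3 <> 0%C ->
  In v state_list -> inS b2 b3 (za_embed b2 b3 v).
Proof.
  intros H2 H2' H3 H3' Hin.
  assert (Digits : forall c, In c (filter not_all_ones digit_tuples) ->
    exists c0 c1 c2 c3, ~ (c0 = true /\ c1 = true /\ c2 = true /\ c3 = true) /\
      za_embed b2 b3 (digit_vector c) =
      RCadd (RCscal (b2Z c0) (alz b2 b3 0)) (RCadd (RCscal (b2Z c1) (alz b2 b3 1))
      (RCadd (RCscal (b2Z c2) (alz b2 b3 2)) (RCscal (b2Z c3) (alz b2 b3 3))))).
  { intros [[[c0 c1] c2] c3] Hc. rewrite filter_In in Hc.
    exists c0, c1, c2, c3. split; [|apply za_embed_digit_vector].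
    intros (-> & -> & -> & ->). destruct Hc as [_ Hc]. discriminate. }
  assert (Extra : forall ks, In ks extra_exponents ->
    (ks = [-1; 0; 2] \/ ks = [-2; -1; 1] \/ ks = [-3; -2; 0; 3])%Z).
  { simpl. intros ks [<-|[<-|[<-|[]]]]; auto. }
  unfold state_list in Hin. rewrite !in_app_iff in Hin.
  destruct Hin as [Hin|[Hin|[Hin|Hin]]]; apply in_map_iff in Hin; destruct Hin as [w [<- Hw]].
  - left. destruct (Digits w Hw) as (c0 & c1 & c2 & c3 & Hn & E). exists c0, c1, c2, c3. auto.
  - left. apply in_map_iff in Hw as [c [<- Hc]].
    destruct (Digits c Hc) as (c0 & c1 & c2 & c3 & Hn & E). exists c0, c1, c2, c3.
    rewrite za_embed_opp, E. auto.
  - right. exists w. rewrite za_embed_sum by assumption. auto.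
  - right. apply in_map_iff in Hw as [ks [<- Hks]].
    exists ks. rewrite za_embed_opp, za_embed_sum by assumption. auto.
Qed.

Definition is_stateb (v : zalpha) : bool := existsb (za_eqb v) state_list.

Lemma is_stateb_In v : is_stateb v = true -> In v state_list.
Proof.
  unfold is_stateb. rewrite existsb_exists. intros [w [Hw E]].
  apply za_eqb_eq in E. subst. exact Hw.
Qed.

Lemma za_zero_in_state_list : In za_zero state_list.
Proof. apply is_stateb_In. vm_compute. reflexivity. Qed.

Definition za_l1 (v : zalpha) : Z :=
  match v with Zalpha a b c d => Z.abs a + Z.abs b + Z.abs c + Z.abs d end.

Lemma state_list_l1 v : In v state_list -> (za_l1 v <= 4)%Z.
Proof.
  assert (C : forallb (fun v => za_l1 v <=? 4)%Z state_list = true) by (vm_compute; reflexivity).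
  rewrite forallb_forall in C. intro H. apply Z.leb_le, C, H.
Qed.

Lemma za_evalR_le_l1 r v : Rabs r <= 1 -> Rabs (za_evalR r v) <= IZR (za_l1 v).
Proof.
  intro Hr. destruct v as [a b c d]. unfold za_evalR, za_l1. rewrite !plus_IZR, !abs_IZR.
  assert (P : forall (k : Z) n, Rabs (IZR k * r^n) <= Rabs (IZR k)).
  { intros k n. rewrite Rabs_mult, <- RPow_abs.
    assert (Rabs r ^ n <= 1) by (rewrite <- (pow1 n); apply pow_incr; split; [apply Rabs_pos | exact Hr]).
    pose proof (Rabs_pos (IZR k)). nra. }
  pose proof (P b 1%nat). pose proof (P c 2%nat). pose proof (P d 3%nat).
  pose proof (Rabs_triang (IZR a + IZR b * r + IZR c * r^2) (IZR d * r^3)).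
  pose proof (Rabs_triang (IZR a + IZR b * r) (IZR c * r^2)).
  pose proof (Rabs_triang (IZR a) (IZR b * r)).
  rewrite pow_1 in *. lra.
Qed.

Lemma za_evalC_le_l1 z v : Cmod z <= 1 -> Cmod (za_evalC z v) <= IZR (za_l1 v).
Proof.
  intro Hz. destruct v as [a b c d]. unfold za_evalC, za_l1. rewrite !plus_IZR, !abs_IZR.
  assert (P : forall (k : Z) n, Cmod (RtoC (IZR k) * Cpow z n) <= Rabs (IZR k)).
  { intros k n. rewrite Cmod_mult, Cmod_R, Cmod_pow.
    assert (Cmod z ^ n <= 1) by (rewrite <- (pow1 n); apply pow_incr; split; [apply Cmod_ge_0 | exact Hz]).
    pose proof (Rabs_pos (IZR k)). nra. }
  pose proof (P b 1%nat). pose proof (P c 2%nat). pose proof (P d 3%nat).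
  pose proof (Cmod_triangle (RtoC (IZR a) + RtoC (IZR b) * z + RtoC (IZR c) * Cpow z 2)
                            (RtoC (IZR d) * Cpow z 3)).
  pose proof (Cmod_triangle (RtoC (IZR a) + RtoC (IZR b) * z) (RtoC (IZR c) * Cpow z 2)).
  pose proof (Cmod_triangle (RtoC (IZR a)) (RtoC (IZR b) * z)).
  rewrite Cmod_R in *. rewrite Cpow_1_r in *. lra.
Qed.

Lemma inS_state_list b2 b3 s : PR b2 = 0 -> b2 <> 0 -> PC b3 = 0%C -> b3 <> 0%C ->
  inS b2 b3 s -> exists v, In v state_list /\ s = za_embed b2 b3 v.
Proof.
  intros H2 H2' H3 H3' [(c0 & c1 & c2 & c3 & Hn & Hs) | (ks & Hks & Hs)].
  - cbv zeta in Hs. rewrite <- za_embed_digit_vector in Hs.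
    assert (Hin : In (digit_vector (c0, c1, c2, c3)) state_list /\
                  In (za_opp (digit_vector (c0, c1, c2, c3))) state_list).
    { split; apply is_stateb_In;
        destruct c0, c1, c2, c3; try (exfalso; apply Hn; repeat split; reflexivity); reflexivity. }
    destruct Hs as [-> | ->].
    + exists (digit_vector (c0, c1, c2, c3)). split; [apply Hin | reflexivity].
    + exists (za_opp (digit_vector (c0, c1, c2, c3))). rewrite za_embed_opp. split; [apply Hin | reflexivity].
  - rewrite <- za_embed_sum in Hs by assumption.
    assert (Hin : In (za_sum ks) state_list /\ In (za_opp (za_sum ks)) state_list).
    { split; apply is_stateb_In; destruct Hks as [-> | [-> | ->]]; reflexivity. }
    destruct Hs as [-> | ->].
    + exists (za_sum ks). split; [apply Hin | reflexivity].
    + exists (za_opp (za_sum ks)). rewrite za_embed_opp. split; [apply Hin | reflexivity].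
Qed.

Section Differences.

Variables eps eps' : nat -> bool.

Definition digit_diff (n : nat) : Z := (b2Z (eps n) - b2Z (eps' n))%Z.

Lemma digit_diff_range n : (digit_diff n = -1 \/ digit_diff n = 0 \/ digit_diff n = 1)%Z.
Proof. unfold digit_diff. destruct (eps n), (eps' n); simpl; auto. Qed.

Lemma digit_diff_abs n : Rabs (IZR (digit_diff n)) <= 1.
Proof.
  destruct (digit_diff_range n) as [E|[E|E]]; rewrite E; unfold Rabs; destruct Rcase_abs; lra.
Qed.

Fixpoint state_seq (n : nat) : zalpha :=
  match n with O => za_zero | S m => za_shift (state_seq m) (digit_diff m) end.

Fixpoint diff_sum (g : nat -> R) (n : nat) : R :=
  match n with O => 0 | S m => diff_sum g m + IZR (digit_diff m) * g m end.

Fixpoint diff_sumC (z : C) (n : nat) : C :=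
  match n with O => 0%C | S m => (diff_sumC z m + RtoC (IZR (digit_diff m)) * Cpow z m)%C end.

Lemma state_seq_evalR r n : PR r = 0 -> za_evalR r (state_seq n) * r^n = r^4 * diff_sum (pow r) n.
Proof.
  intro H. induction n as [|n IH]; simpl.
  - ring.
  - transitivity ((za_evalR r (za_shift (state_seq n) (digit_diff n)) * r) * r^n); [ring|].
    rewrite za_evalR_shift by exact H. rewrite Rmult_plus_distr_r, IH. ring.
Qed.

Lemma state_seq_evalC z n : PC z = 0%C ->
  (za_evalC z (state_seq n) * Cpow z n = Cpow z 4 * diff_sumC z n)%C.
Proof.
  intro H. induction n as [|n IH]; simpl state_seq; simpl diff_sumC.
  - unfold za_evalC, za_zero. simpl. ring.
  - transitivity ((za_evalC z (za_shift (state_seq n) (digit_diff n)) * z) * Cpow z n)%C;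
      [simpl; ring|].
    rewrite za_evalC_shift by exact H.
    transitivity (za_evalC z (state_seq n) * Cpow z n
      + RtoC (IZR (digit_diff n)) * Cpow z 4 * Cpow z n)%C; [ring|].
    rewrite IH. ring.
Qed.

End Differences.

Fixpoint digit_sum (be : R) (eps : nat -> bool) (n : nat) : R :=
  match n with O => 0 | S m => digit_sum be eps m + IZR (b2Z (eps m)) * be^m end.

Lemma digit_sum_nonneg be eps n : 0 <= be -> 0 <= digit_sum be eps n.
Proof.
  intro H. induction n as [|n IH]; simpl; [lra|].
  pose proof (pow_le be n H). destruct (eps n); simpl; nra.
Qed.

(* The greedy bound for admissible expansions: four consecutive digits below n are never all 1,
   and 1 + β + β^2 + β^3 = β^4. *)
Lemma digit_sum_lt_pow be eps : 19/10 <= be -> PR be = 0 -> inDinf eps ->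
  forall n, digit_sum be eps n < be^n.
Proof.
  intros Hb Hp Hd n. unfold PR in Hp.
  induction n as [n IH] using (well_founded_induction lt_wf).
  assert (B2 : be^2 >= be + 1) by nra.
  assert (B3 : be^3 >= be^2 + be + 1) by nra.
  destruct n as [|m]; simpl; [lra|].
  pose proof (pow_lt be m ltac:(lra)).
  destruct (eps m) eqn:Em; simpl b2Z.
  2: { specialize (IH m (Nat.lt_succ_diag_r m)). nra. }
  destruct m as [|p]; simpl; [lra|].
  pose proof (pow_lt be p ltac:(lra)).
  destruct (eps p) eqn:Ep; simpl b2Z.
  2: { specialize (IH p ltac:(lia)). simpl in *. nra. }
  destruct p as [|q]; simpl; [nra|].
  pose proof (pow_lt be q ltac:(lra)).
  destruct (eps q) eqn:Eq; simpl b2Z.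
  2: { specialize (IH q ltac:(lia)). simpl in *. nra. }
  destruct q as [|s]; simpl; [nra|].
  pose proof (pow_lt be s ltac:(lra)).
  destruct (eps s) eqn:Es; [exfalso; apply (Hd s); auto|].
  simpl b2Z. specialize (IH s ltac:(lia)). simpl in *.
  replace (be * (be * (be * (be * be ^ s)))) with (be^s * be^4) by ring.
  replace (be^4) with (be^3 + be^2 + be + 1) by lra. nra.
Qed.

Lemma diff_sum_pow_digit_sum eps eps' r n :
  diff_sum eps eps' (pow r) n = digit_sum r eps n - digit_sum r eps' n.
Proof.
  induction n as [|n IH]; simpl; [ring|].
  rewrite IH. unfold digit_diff. rewrite minus_IZR. ring.
Qed.

Lemma state_seq_not_alpha4 be eps eps' n : 19/10 <= be -> PR be = 0 -> inDinf eps -> inDinf eps' ->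
  state_seq eps eps' n <> Zalpha 1 1 1 1 /\ state_seq eps eps' n <> Zalpha (-1) (-1) (-1) (-1).
Proof.
  intros Hb Hp D D'. pose proof (state_seq_evalR eps eps' be n Hp) as E.
  rewrite diff_sum_pow_digit_sum in E.
  pose proof (digit_sum_lt_pow be eps Hb Hp D n). pose proof (digit_sum_lt_pow be eps' Hb Hp D' n).
  pose proof (digit_sum_nonneg be eps n ltac:(lra)). pose proof (digit_sum_nonneg be eps' n ltac:(lra)).
  pose proof (pow_lt be n ltac:(lra)). pose proof (pow_lt be 4 ltac:(lra)).
  unfold PR in Hp.
  split; intro Hv; rewrite Hv in E; simpl za_evalR in E.
  - replace (1 + 1 * be + 1 * be^2 + 1 * be^3) with (be^4) in E by lra. nra.
  - replace (-1 + -1 * be + -1 * be^2 + -1 * be^3) with (- be^4) in E by lra. nra.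
Qed.

Lemma infinite_path_iff_states b2 b3 eps eps' : PR b2 = 0 -> b2 <> 0 -> PC b3 = 0%C -> b3 <> 0%C ->
  infinite_path b2 b3 eps eps' <-> forall n, inS b2 b3 (za_embed b2 b3 (state_seq eps eps' n)).
Proof.
  intros H2 H2' H3 H3'. split.
  - intros [e [He0 He]].
    assert (E : forall n, e n = za_embed b2 b3 (state_seq eps eps' n)).
    { induction n as [|n IH]; simpl.
      - rewrite He0. symmetry. apply za_embed_zero.
      - destruct (He n) as [_ [_ ->]]. rewrite IH. unfold digit_diff.
        symmetry. apply za_embed_shift; assumption. }
    intro n. rewrite <- E. apply He.
  - intro H. exists (fun n => za_embed b2 b3 (state_seq eps eps' n)).
    split; [apply za_embed_zero|]. intro n. split; [apply H|]. split; [apply H|].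
    simpl. apply za_embed_shift; assumption.
Qed.

Definition mul_lo (w : Z) (I : Z * Z) : Z := if (0 <=? w)%Z then w * fst I else w * snd I.
Definition mul_hi (w : Z) (I : Z * Z) : Z := if (0 <=? w)%Z then w * snd I else w * fst I.
Definition sq_lo (lo hi : Z) : Z :=
  if (0 <? lo)%Z then lo * lo else if (hi <? 0)%Z then hi * hi else 0.

Definition affine3_lo (a b c d : Z) (I1 I2 I3 : Z * Z) : Z :=
  a * scale + mul_lo b I1 + mul_lo c I2 + mul_lo d I3.
Definition affine3_hi (a b c d : Z) (I1 I2 I3 : Z * Z) : Z :=
  a * scale + mul_hi b I1 + mul_hi c I2 + mul_hi d I3.
Definition affine2_lo (b c d : Z) (I2 I3 : Z * Z) : Z := b * scale + mul_lo c I2 + mul_lo d I3.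
Definition affine2_hi (b c d : Z) (I2 I3 : Z * Z) : Z := b * scale + mul_hi c I2 + mul_hi d I3.

(* [scale * ρ^4 / (1 - ρ)] for ρ = 0.774804113216 > |β2|, rounded up. *)
Definition K_real : Z := 1600321413865.
(* [scale^3 * (ρ^4 / (1 - ρ))^2] for ρ = 0.818276098781 > |β3|, rounded up. *)
Definition K_complex : Z := 6086600879225831634638783459961494606.

Definition exceeds_real (v : zalpha) : bool :=
  match v with
  | Zalpha a b c d =>
      (K_real <? affine3_lo a b c d I_r I_r2 I_r3) || (affine3_hi a b c d I_r I_r2 I_r3 <? - K_real)
  end%Z.

(* |v(β3)|^2 = (Re v(β3))^2 + (Im β3)^2 (Im v(β3) / Im β3)^2 *)
Definition exceeds_complex (v : zalpha) : bool :=
  match v with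
  | Zalpha a b c d =>
      K_complex <?
        sq_lo (affine3_lo a b c d I_re1 I_re2 I_re3) (affine3_hi a b c d I_re1 I_re2 I_re3) * scale
        + fst I_y2 * sq_lo (affine2_lo b c d I_im2 I_im3) (affine2_hi b c d I_im2 I_im3)
  end%Z.

(* [Zalpha 1 1 1 1] is α^4, which an admissible difference can never reach (see
   [state_seq_not_alpha4]). *)
Definition bad (v : zalpha) : bool :=
  za_eqb v (Zalpha 1 1 1 1) || za_eqb v (Zalpha (-1) (-1) (-1) (-1))
  || exceeds_real v || exceeds_complex v.

(* Written with [if] rather than [||] and [forallb] so that [vm_compute] evaluates lazily. *)
Fixpoint doomed (k : nat) (v : zalpha) : bool :=
  if bad v then true else
  match k with
  | O => false
  | S k =>
      if doomed k (za_shift v (-1)) then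
        if doomed k (za_shift v 0) then doomed k (za_shift v 1) else false
      else false
  end.

Definition closure_certificate : bool :=
  forallb (fun s => forallb (fun e =>
    if is_stateb (za_shift s e) then true else doomed 8 (za_shift s e)) [-1; 0; 1]%Z) state_list.

Lemma closure_certificate_true : closure_certificate = true.
Proof. vm_compute. reflexivity. Qed.

Lemma mul_lo_sound w I m : enclosed I m -> IZR (mul_lo w I) <= IZR w * m * IZR scale.
Proof.
  destruct I as [L U]. unfold enclosed, mul_lo; cbn [fst snd]. intros [H1 H2].
  destruct (Z.leb_spec 0 w) as [h|h]; rewrite mult_IZR;
    [apply IZR_le in h | apply IZR_lt in h]; nra.
Qed.

Lemma mul_hi_sound w I m : enclosed I m -> IZR w * m * IZR scale <= IZR (mul_hi w I).
Proof.
  destruct I as [L U]. unfold enclosed, mul_hi; cbn [fst snd]. intros [H1 H2].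
  destruct (Z.leb_spec 0 w) as [h|h]; rewrite mult_IZR;
    [apply IZR_le in h | apply IZR_lt in h]; nra.
Qed.

Lemma sq_lo_sound lo hi X : IZR lo <= X <= IZR hi -> IZR (sq_lo lo hi) <= X^2.
Proof.
  intros [H1 H2]. unfold sq_lo. destruct (Z.ltb_spec 0 lo) as [h|h].
  - rewrite mult_IZR. apply IZR_lt in h. nra.
  - destruct (Z.ltb_spec hi 0) as [h'|h'].
    + rewrite mult_IZR. apply IZR_lt in h'. nra.
    + pose proof (pow2_ge_0 X). exact H.
Qed.

Lemma sq_lo_nonneg lo hi : (0 <= sq_lo lo hi)%Z.
Proof. unfold sq_lo. destruct (0 <? lo)%Z, (hi <? 0)%Z; nia. Qed.

Lemma affine3_sound a b c d I1 I2 I3 m1 m2 m3 :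
  enclosed I1 m1 -> enclosed I2 m2 -> enclosed I3 m3 ->
  IZR (affine3_lo a b c d I1 I2 I3) <= (IZR a + IZR b * m1 + IZR c * m2 + IZR d * m3) * IZR scale
  <= IZR (affine3_hi a b c d I1 I2 I3).
Proof.
  intros H1 H2 H3. unfold affine3_lo, affine3_hi. rewrite !plus_IZR, !mult_IZR.
  pose proof (mul_lo_sound b _ _ H1). pose proof (mul_lo_sound c _ _ H2).
  pose proof (mul_lo_sound d _ _ H3). pose proof (mul_hi_sound b _ _ H1).
  pose proof (mul_hi_sound c _ _ H2). pose proof (mul_hi_sound d _ _ H3).
  split; nra.
Qed.

Lemma affine2_sound b c d I2 I3 m2 m3 : enclosed I2 m2 -> enclosed I3 m3 ->
  IZR (affine2_lo b c d I2 I3) <= (IZR b + IZR c * m2 + IZR d * m3) * IZR scale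
  <= IZR (affine2_hi b c d I2 I3).
Proof.
  intros H2 H3. unfold affine2_lo, affine2_hi. rewrite !plus_IZR, !mult_IZR.
  pose proof (mul_lo_sound c _ _ H2). pose proof (mul_lo_sound d _ _ H3).
  pose proof (mul_hi_sound c _ _ H2). pose proof (mul_hi_sound d _ _ H3).
  split; nra.
Qed.

Lemma exceeds_real_sound r x y v : conj_enclosure r x y ->
  exceeds_real v = true -> IZR K_real < Rabs (za_evalR r v) * IZR scale.
Proof.
  intros [Hr Hr2 Hr3 _ _ _ _ _ _]. destruct v as [a b c d]. unfold exceeds_real, za_evalR.
  pose proof (affine3_sound a b c d _ _ _ _ _ _ Hr Hr2 Hr3) as [L U].
  assert (0 < IZR scale) by (unfold scale; lra).
  rewrite orb_true_iff, !Z.ltb_lt. intros [h|h]; apply IZR_lt in h; rewrite ?opp_IZR in h;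
    unfold Rabs; destruct Rcase_abs; nra.
Qed.

Lemma exceeds_complex_sound r x y v : conj_enclosure r x y ->
  exceeds_complex v = true -> IZR K_complex < Cmod (za_evalC (x, y) v) ^ 2 * IZR scale ^ 3.
Proof.
  intros [_ _ _ Hx1 Hx2 Hx3 Hy2 Hy3 Hyy]. destruct v as [a b c d].
  rewrite Cmod2_alt.
  replace (Re (za_evalC (x, y) (Zalpha a b c d)))
    with (IZR a + IZR b * x + IZR c * (x^2 - y^2) + IZR d * (x^3 - 3*x*y^2)) by (simpl; ring).
  replace (Im (za_evalC (x, y) (Zalpha a b c d)))
    with (y * (IZR b + IZR c * (2*x) + IZR d * (3*x^2 - y^2))) by (simpl; ring).
  unfold exceeds_complex. rewrite Z.ltb_lt. intro h. apply IZR_lt in h.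
  rewrite plus_IZR, !mult_IZR in h.
  pose proof (sq_lo_sound _ _ _ (affine3_sound a b c d _ _ _ _ _ _ Hx1 Hx2 Hx3)) as SA.
  pose proof (sq_lo_sound _ _ _ (affine2_sound b c d _ _ _ _ Hy2 Hy3)) as SC.
  pose proof (IZR_le _ _ (sq_lo_nonneg (affine2_lo b c d I_im2 I_im3) (affine2_hi b c d I_im2 I_im3))).
  revert Hyy h SA SC H. cbv [enclosed scale fst snd I_y2].
  set (A := IZR a + IZR b * x + IZR c * (x^2 - y^2) + IZR d * (x^3 - 3*x*y^2)).
  set (B := IZR b + IZR c * (2*x) + IZR d * (3*x^2 - y^2)).
  set (S1 := IZR (sq_lo _ _)). set (S2 := IZR (sq_lo (affine2_lo _ _ _ _ _) _)).
  clearbody A B S1 S2. intros. nra.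
Qed.

Lemma bad_false_of_bounds r x y v : conj_enclosure r x y ->
  v <> Zalpha 1 1 1 1 -> v <> Zalpha (-1) (-1) (-1) (-1) ->
  Rabs (za_evalR r v) * IZR scale <= IZR K_real ->
  Cmod (za_evalC (x, y) v) ^ 2 * IZR scale ^ 3 <= IZR K_complex -> bad v = false.
Proof.
  intros He H1 H2 HR HC. unfold bad.
  destruct (za_eqb v (Zalpha 1 1 1 1)) eqn:E1; [apply za_eqb_eq in E1; contradiction|].
  destruct (za_eqb v (Zalpha (-1) (-1) (-1) (-1))) eqn:E2; [apply za_eqb_eq in E2; contradiction|].
  destruct (exceeds_real v) eqn:E3; [apply (exceeds_real_sound _ _ _ _ He) in E3; lra|].
  destruct (exceeds_complex v) eqn:E4; [apply (exceeds_complex_sound _ _ _ _ He) in E4; lra|].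
  reflexivity.
Qed.

Section Closure.

Variable u : nat -> zalpha.
Variable d : nat -> Z.
Hypothesis u_step : forall n, u (S n) = za_shift (u n) (d n).
Hypothesis d_digit : forall n, (d n = -1 \/ d n = 0 \/ d n = 1)%Z.
Hypothesis u_not_bad : forall n, bad (u n) = false.

Lemma not_doomed k n : doomed k (u n) = false.
Proof.
  revert n. induction k as [|k IH]; intro n; simpl; rewrite u_not_bad; [reflexivity|].
  specialize (IH (S n)). rewrite u_step in IH.
  destruct (doomed k (za_shift (u n) (-1))) eqn:A; [|reflexivity].
  destruct (doomed k (za_shift (u n) 0)) eqn:B; [|reflexivity].
  destruct (d_digit n) as [E|[E|E]]; rewrite E in IH; congruence.
Qed.

Lemma states_in_list : In (u 0) state_list -> forall n, In (u n) state_list.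
Proof.
  intros H0 n. induction n as [|n IH]; [exact H0|].
  pose proof closure_certificate_true as C. unfold closure_certificate in C.
  rewrite forallb_forall in C. specialize (C _ IH). rewrite forallb_forall in C.
  assert (Hd : In (d n) [-1; 0; 1]%Z) by (destruct (d_digit n) as [E|[E|E]]; rewrite E; simpl; auto).
  specialize (C _ Hd). rewrite <- u_step, not_doomed in C.
  destruct (is_stateb (u (S n))) eqn:E; [apply is_stateb_In, E | discriminate].
Qed.

End Closure.

Lemma zpowC_nat (z : C) n : zpowC z (Z.of_nat n) = Cpow z n.
Proof. destruct n as [|n]; simpl; [reflexivity|]. rewrite SuccNat2Pos.id_succ. reflexivity. Qed.

Lemma zpowC_opp_nat (z : C) n : zpowC z (- Z.of_nat n) = Cpow (/ z) n.
Proof. destruct n as [|n]; simpl; [reflexivity|]. rewrite SuccNat2Pos.id_succ. reflexivity. Qed.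

Lemma zpowC_succ (z : C) k : z <> 0%C -> zpowC z (k + 1) = (zpowC z k * z)%C.
Proof.
  intro Hz. destruct (Z_le_gt_dec 0 k) as [h|h].
  - destruct (Z_of_nat_complete k h) as [n ->].
    replace (Z.of_nat n + 1)%Z with (Z.of_nat (S n)) by lia.
    rewrite !zpowC_nat. simpl. ring.
  - replace k with (- Z.of_nat (S (Z.to_nat (- k) - 1)))%Z by lia.
    replace (- Z.of_nat (S (Z.to_nat (- k) - 1)) + 1)%Z with (- Z.of_nat (Z.to_nat (- k) - 1))%Z by lia.
    rewrite !zpowC_opp_nat. simpl. field. exact Hz.
Qed.

Lemma zpowC_add_nat (z : C) l n : z <> 0%C -> zpowC z (l + Z.of_nat n) = (zpowC z l * Cpow z n)%C.
Proof.
  intro Hz. induction n as [|n IH].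
  - simpl. rewrite Z.add_0_r. ring.
  - replace (l + Z.of_nat (S n))%Z with ((l + Z.of_nat n) + 1)%Z by lia.
    rewrite zpowC_succ, IH by exact Hz. simpl. ring.
Qed.

Lemma zpowC_neq_0 (z : C) l : z <> 0%C -> zpowC z l <> 0%C.
Proof.
  intro Hz. destruct l as [|p|p]; simpl.
  - intro E. apply (f_equal fst) in E. simpl in E. lra.
  - apply Cpow_nz, Hz.
  - apply Cpow_nz. intro E. apply (f_equal Cmod) in E. rewrite Cmod_inv, Cmod_0 in E by exact Hz.
    revert E. apply Rinv_neq_0_compat. intro E. apply Hz, Cmod_eq_0, E.
Qed.

Lemma is_lim_seq_ext_iff (u v : nat -> R) l :
  (forall n, u n = v n) -> (is_lim_seq u l <-> is_lim_seq v l).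
Proof. intro E. split; apply is_lim_seq_ext; auto. Qed.

Lemma is_lim_seq_scal0_iff (c : R) u : c <> 0 ->
  (is_lim_seq (fun n => c * u n) 0 <-> is_lim_seq u 0).
Proof.
  intro Hc. split; intro H.
  - apply (is_lim_seq_ext (fun n => / c * (c * u n))); [intro n; field; exact Hc|].
    replace (Finite 0) with (Rbar_mult (/ c) 0) by (simpl; f_equal; ring).
    apply is_lim_seq_scal_l, H.
  - replace (Finite 0) with (Rbar_mult c 0) by (simpl; f_equal; ring).
    apply is_lim_seq_scal_l, H.
Qed.

Lemma im_le_Cmod (z : C) : Rabs (Im z) <= Cmod z.
Proof.
  pose proof (Cmod2_alt z). pose proof (Cmod_ge_0 z). pose proof (Rabs_pos (Im z)).
  pose proof (pow2_ge_0 (Re z)). rewrite <- (pow2_abs (Im z)) in H. nra.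
Qed.

Lemma Cmod_le_abs_Re_Im (z : C) : Cmod z <= Rabs (Re z) + Rabs (Im z).
Proof.
  pose proof (Cmod2_alt z). pose proof (Cmod_ge_0 z).
  pose proof (Rabs_pos (Re z)). pose proof (Rabs_pos (Im z)).
  rewrite <- (pow2_abs (Re z)), <- (pow2_abs (Im z)) in H. nra.
Qed.

Lemma is_lim_seq_Cmod0_iff (w : nat -> C) :
  is_lim_seq (fun n => Cmod (w n)) 0 <->
  is_lim_seq (fun n => Re (w n)) 0 /\ is_lim_seq (fun n => Im (w n)) 0.
Proof.
  split.
  - intro H. split; apply is_lim_seq_abs_0;
      apply (is_lim_seq_le_le (fun _ => 0) _ (fun n => Cmod (w n))); auto using is_lim_seq_const;
      intro n; split; auto using Rabs_pos, re_le_Cmod, im_le_Cmod.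
  - intros [H1 H2].
    apply (is_lim_seq_le_le (fun _ => 0) _ (fun n => Rabs (Re (w n)) + Rabs (Im (w n)))).
    + intro n. split; [apply Cmod_ge_0 | apply Cmod_le_abs_Re_Im].
    + apply is_lim_seq_const.
    + replace (Finite 0) with (Rbar_plus 0 0) by (simpl; f_equal; ring).
      apply is_lim_seq_plus'; [apply (is_lim_seq_abs_0 (fun n => Re (w n)))
                              | apply (is_lim_seq_abs_0 (fun n => Im (w n)))]; assumption.
Qed.

Lemma ex_series_digits (eps : nat -> bool) (g : nat -> R) K rho :
  0 <= rho < 1 -> (forall n, Rabs (g n) <= K * rho^n) ->
  ex_series (fun n => IZR (b2Z (eps n)) * g n).
Proof.
  intros Hr Hg. apply (@ex_series_le R_AbsRing R_CompleteNormedModule _ (fun n => K * rho^n)).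
  - intro n. change (norm (IZR (b2Z (eps n)) * g n)) with (Rabs (IZR (b2Z (eps n)) * g n)).
    rewrite Rabs_mult. specialize (Hg n). pose proof (Rabs_pos (g n)).
    destruct (eps n); simpl; rewrite ?Rabs_R1, ?Rabs_R0; lra.
  - apply (@ex_series_scal_l R_AbsRing R_NormedModule).
    apply ex_series_geom. rewrite Rabs_pos_eq; lra.
Qed.

Lemma Series_eq_iff_diff_sum eps eps' g K rho :
  0 <= rho < 1 -> (forall n, Rabs (g n) <= K * rho^n) ->
  (Series (fun n => IZR (b2Z (eps n)) * g n) = Series (fun n => IZR (b2Z (eps' n)) * g n) <->
   is_lim_seq (diff_sum eps eps' g) 0).
Proof.
  intros Hr Hg.
  set (S := Series (fun n => IZR (b2Z (eps n)) * g n)).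
  set (S' := Series (fun n => IZR (b2Z (eps' n)) * g n)).
  assert (L : is_lim_seq (diff_sum eps eps' g) (S - S')).
  { pose proof (Series_correct _ (ex_series_digits eps g K rho Hr Hg)) as L1.
    pose proof (Series_correct _ (ex_series_digits eps' g K rho Hr Hg)) as L2.
    apply is_lim_seq_incr_1.
    eapply is_lim_seq_ext; [|exact (is_lim_seq_minus' _ _ _ _ L1 L2)].
    intro n. induction n as [|n IH].
    - rewrite !sum_O. simpl. unfold digit_diff. rewrite minus_IZR. ring.
    - rewrite !sum_Sn. change plus with Rplus. simpl in IH |- *. rewrite <- IH.
      unfold digit_diff. rewrite minus_IZR. ring. }
  split.
  - intro E. rewrite E, Rminus_diag in L. exact L.
  - intro L0. apply is_lim_seq_unique in L, L0. rewrite L in L0.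
    apply Rbar_finite_eq in L0. lra.
Qed.

Lemma diff_sum_powerRZ eps eps' r l : r <> 0 -> forall n,
  diff_sum eps eps' (fun k => powerRZ r (l + Z.of_nat k)) n = powerRZ r l * diff_sum eps eps' (pow r) n.
Proof.
  intros Hr n. induction n as [|n IH]; simpl; [ring|].
  rewrite IH, powerRZ_add, <- pow_powerRZ by exact Hr. ring.
Qed.

Lemma diff_sum_zpowC eps eps' (f : C -> R) (z : C) l : z <> 0%C ->
  f 0%C = 0 -> (forall a b, f (a + b)%C = f a + f b) -> (forall (t : R) w, f (RtoC t * w)%C = t * f w) ->
  forall n, diff_sum eps eps' (fun k => f (zpowC z (l + Z.of_nat k))) n = f (zpowC z l * diff_sumC eps eps' z n)%C.
Proof.
  intros Hz H0 Hadd Hscal n. induction n as [|n IH]; simpl.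
  - rewrite Cmult_0_r. symmetry. exact H0.
  - rewrite IH, zpowC_add_nat, <- Hscal, <- Hadd by exact Hz. f_equal. ring.
Qed.

Lemma Series_powerRZ_eq_iff eps eps' r l : r <> 0 -> Rabs r < 1 ->
  (Series (fun n => IZR (b2Z (eps n)) * powerRZ r (l + Z.of_nat n))
   = Series (fun n => IZR (b2Z (eps' n)) * powerRZ r (l + Z.of_nat n))
   <-> is_lim_seq (diff_sum eps eps' (pow r)) 0).
Proof.
  intros Hr Hr1.
  rewrite (Series_eq_iff_diff_sum _ _ _ (Rabs (powerRZ r l)) (Rabs r)).
  - rewrite (is_lim_seq_ext_iff _ _ _ (diff_sum_powerRZ eps eps' r l Hr)).
    apply is_lim_seq_scal0_iff, powerRZ_NOR, Hr.
  - split; [apply Rabs_pos | exact Hr1].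
  - intro n. rewrite powerRZ_add, <- pow_powerRZ, Rabs_mult, RPow_abs by exact Hr. lra.
Qed.

Lemma Series_zpowC_eq_iff eps eps' (z : C) l : z <> 0%C -> Cmod z < 1 ->
  (Series (fun n => IZR (b2Z (eps n)) * Re (zpowC z (l + Z.of_nat n)))
   = Series (fun n => IZR (b2Z (eps' n)) * Re (zpowC z (l + Z.of_nat n)))
   /\ Series (fun n => IZR (b2Z (eps n)) * Im (zpowC z (l + Z.of_nat n)))
   = Series (fun n => IZR (b2Z (eps' n)) * Im (zpowC z (l + Z.of_nat n)))
   <-> is_lim_seq (fun n => Cmod (diff_sumC eps eps' z n)) 0).
Proof.
  intros Hz Hz1.
  assert (Hr : 0 <= Cmod z < 1) by (split; [apply Cmod_ge_0 | exact Hz1]).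
  assert (B : forall n, Cmod (zpowC z (l + Z.of_nat n)) <= Cmod (zpowC z l) * Cmod z ^ n).
  { intro n. rewrite zpowC_add_nat, Cmod_mult, Cmod_pow by exact Hz. lra. }
  rewrite (Series_eq_iff_diff_sum _ _ _ _ _ Hr) by (intro n; eapply Rle_trans; [apply re_le_Cmod | apply B]).
  rewrite (Series_eq_iff_diff_sum _ _ _ _ _ Hr) by (intro n; eapply Rle_trans; [apply im_le_Cmod | apply B]).
  rewrite (is_lim_seq_ext_iff _ _ _ (diff_sum_zpowC eps eps' Re z l Hz eq_refl (fun a b => eq_refl)
    (fun t w => ltac:(destruct w; simpl; ring)))).
  rewrite (is_lim_seq_ext_iff _ _ _ (diff_sum_zpowC eps eps' Im z l Hz eq_refl (fun a b => eq_refl)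
    (fun t w => ltac:(destruct w; simpl; ring)))).
  rewrite <- is_lim_seq_Cmod0_iff.
  rewrite (is_lim_seq_ext_iff _ (fun n => Cmod (zpowC z l) * Cmod (diff_sumC eps eps' z n)))
    by (intro n; apply Cmod_mult).
  apply is_lim_seq_scal0_iff. intro E. apply (zpowC_neq_0 z l Hz), Cmod_eq_0, E.
Qed.

Lemma RC_eq_iff (a a' b b' c c' : R) :
  ((a, (b, c)) : RC) = (a', (b', c')) <-> a = a' /\ b = b' /\ c = c'.
Proof. split; [intro H; injection H; auto | intros (-> & -> & ->); reflexivity]. Qed.

Lemma alpha_value_split b2 b3 l eps : alpha_value b2 b3 l eps =
  (Series (fun n => IZR (b2Z (eps n)) * powerRZ b2 (l + Z.of_nat n)),
   (Series (fun n => IZR (b2Z (eps n)) * Re (zpowC b3 (l + Z.of_nat n))),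
    Series (fun n => IZR (b2Z (eps n)) * Im (zpowC b3 (l + Z.of_nat n))))).
Proof.
  unfold alpha_value. f_equal. f_equal; apply Series_ext; intro n;
    cbn [snd RCscal alz]; destruct (zpowC b3 (l + Z.of_nat n)); simpl; ring.
Qed.

Lemma alpha_value_eq_iff b2 (b3 : C) l eps eps' : b2 <> 0 -> Rabs b2 < 1 -> b3 <> 0%C -> Cmod b3 < 1 ->
  (alpha_value b2 b3 l eps = alpha_value b2 b3 l eps' <->
   is_lim_seq (diff_sum eps eps' (pow b2)) 0 /\
   is_lim_seq (fun n => Cmod (diff_sumC eps eps' b3 n)) 0).
Proof.
  intros Hb2 Hr2 Hb3 Hr3.
  rewrite !alpha_value_split, RC_eq_iff, Series_powerRZ_eq_iff, Series_zpowC_eq_iff by assumption.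
  reflexivity.
Qed.

Lemma is_lim_seq_0_of_geom_bound (u : nat -> R) rho M : 0 <= rho < 1 ->
  (forall n, Rabs (u n) <= M * rho^n) -> is_lim_seq u 0.
Proof.
  intros Hr H. apply is_lim_seq_abs_0.
  apply (is_lim_seq_le_le (fun _ => 0) _ (fun n => M * rho^n)).
  - intro n. split; [apply Rabs_pos | apply H].
  - apply is_lim_seq_const.
  - replace (Finite 0) with (Rbar_mult M 0) by (simpl; f_equal; ring).
    apply is_lim_seq_scal_l, is_lim_seq_geom. rewrite Rabs_pos_eq; lra.
Qed.

Lemma inS_bounded b2 b3 s : PR b2 = 0 -> b2 <> 0 -> PC b3 = 0%C -> b3 <> 0%C ->
  Rabs b2 <= 1 -> Cmod b3 <= 1 -> inS b2 b3 s -> Rabs (fst s) <= 4 /\ Cmod (snd s) <= 4.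
Proof.
  intros H2 H2' H3 H3' Hr2 Hr3 Hs.
  destruct (inS_state_list b2 b3 s H2 H2' H3 H3' Hs) as [v [Hv ->]].
  pose proof (IZR_le _ _ (state_list_l1 v Hv)).
  pose proof (za_evalR_le_l1 b2 v Hr2). pose proof (za_evalC_le_l1 b3 v Hr3).
  simpl. split; lra.
Qed.

Lemma diff_sums_lim0_of_states b2 b3 eps eps' : PR b2 = 0 -> PC b3 = 0%C ->
  0 < Rabs b2 < 1 -> 0 < Cmod b3 < 1 ->
  (forall n, inS b2 b3 (za_embed b2 b3 (state_seq eps eps' n))) ->
  is_lim_seq (diff_sum eps eps' (pow b2)) 0 /\
  is_lim_seq (fun n => Cmod (diff_sumC eps eps' b3 n)) 0.
Proof.
  intros H2 H3 Hr2 Hr3 HS.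
  assert (Hb2 : b2 <> 0) by (intro E; rewrite E, Rabs_R0 in Hr2; lra).
  assert (Hb3 : b3 <> 0%C) by (intro E; rewrite E, Cmod_0 in Hr3; lra).
  pose proof (fun n => inS_bounded b2 b3 _ H2 Hb2 H3 Hb3 ltac:(lra) ltac:(lra) (HS n)) as B.
  pose proof (pow_lt (Rabs b2) 4 ltac:(lra)). pose proof (pow_lt (Cmod b3) 4 ltac:(lra)).
  split.
  - apply (is_lim_seq_0_of_geom_bound _ (Rabs b2) (4 / Rabs b2 ^ 4)); [lra|]. intro n.
    pose proof (f_equal Rabs (state_seq_evalR eps eps' b2 n H2)) as E.
    rewrite !Rabs_mult, <- !RPow_abs in E.
    apply (Rmult_le_reg_l (Rabs b2 ^ 4)); [lra|]. rewrite <- E.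
    replace (Rabs b2 ^ 4 * (4 / Rabs b2 ^ 4 * Rabs b2 ^ n)) with (4 * Rabs b2 ^ n) by (field; lra).
    apply Rmult_le_compat_r; [apply pow_le; lra | apply (B n)].
  - apply (is_lim_seq_0_of_geom_bound _ (Cmod b3) (4 / Cmod b3 ^ 4)); [lra|]. intro n.
    pose proof (f_equal Cmod (state_seq_evalC eps eps' b3 n H3)) as E.
    rewrite !Cmod_mult, !Cmod_pow in E. rewrite Rabs_pos_eq by apply Cmod_ge_0.
    apply (Rmult_le_reg_l (Cmod b3 ^ 4)); [lra|]. rewrite <- E.
    replace (Cmod b3 ^ 4 * (4 / Cmod b3 ^ 4 * Cmod b3 ^ n)) with (4 * Cmod b3 ^ n) by (field; lra).
    apply Rmult_le_compat_r; [apply pow_le, Cmod_ge_0 | apply (B n)].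
Qed.
Lemma norm_geom_tail {K : AbsRing} {V : NormedModule K} (P : nat -> V) rho : 0 <= rho < 1 ->
  (forall k, norm (minus (P (S k)) (P k)) <= rho^k) ->
  forall n j, norm (minus (P n) (P (j + n)%nat)) <= (rho^n - rho^(j + n)) / (1 - rho).
Proof.
  intros Hr HP n j. induction j as [|j IH].
  - simpl Nat.add. rewrite minus_eq_zero, Rminus_diag. unfold Rdiv. rewrite Rmult_0_l. right. apply norm_zero.
  - rewrite (minus_trans (P (j + n)%nat)).
    eapply Rle_trans; [apply norm_triangle|].
    assert (E : norm (minus (P (j + n)%nat) (P (S j + n)%nat)) = norm (minus (P (S (j + n))) (P (j + n)%nat)))
      by (rewrite <- norm_opp, opp_minus; reflexivity).
    rewrite E. specialize (HP (j + n)%nat).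
    replace ((rho ^ n - rho ^ (S j + n)) / (1 - rho))
      with ((rho ^ n - rho ^ (j + n)) / (1 - rho) + rho ^ (j + n)) by (simpl; field; lra).
    lra.
Qed.

Lemma norm_le_geom_of_lim0 {K : AbsRing} {V : NormedModule K} (P : nat -> V) rho : 0 <= rho < 1 ->
  (forall k, norm (minus (P (S k)) (P k)) <= rho^k) ->
  is_lim_seq (fun m => norm (P m)) 0 -> forall n, norm (P n) <= rho^n / (1 - rho).
Proof.
  intros Hr HP L n.
  assert (Le : forall j, norm (P n) <= norm (P (j + n)%nat) + rho^n / (1 - rho)).
  { intro j. pose proof (norm_triangle_inv (P n) (P (j + n)%nat)) as T.
    pose proof (norm_geom_tail P rho Hr HP n j).
    pose proof (pow_le rho (j + n) ltac:(lra)).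
    assert ((rho ^ n - rho ^ (j + n)) / (1 - rho) <= rho ^ n / (1 - rho)).
    { unfold Rdiv. apply Rmult_le_compat_r; [apply Rlt_le, Rinv_0_lt_compat|]; lra. }
    apply Rabs_le_between in T. lra. }
  apply is_lim_seq_incr_n with (N := n) in L.
  assert (L' : is_lim_seq (fun j => norm (P (j + n)%nat) + rho^n / (1 - rho)) (0 + rho^n / (1 - rho))).
  { apply is_lim_seq_plus'; [exact L | apply is_lim_seq_const]. }
  pose proof (is_lim_seq_le _ _ _ _ Le (is_lim_seq_const (norm (P n))) L') as R.
  simpl in R. lra.
Qed.

Lemma le_geom_ratio (s P rho : R) n : 0 < rho < 1 -> P <= rho^n / (1 - rho) ->
  s * rho^n = rho^4 * P -> s <= rho^4 / (1 - rho).
Proof.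
  intros Hr HP E. pose proof (pow_lt rho n ltac:(lra)). pose proof (pow_lt rho 4 ltac:(lra)).
  apply (Rmult_le_reg_r (rho^n)); [lra|]. rewrite E.
  replace (rho^4 / (1 - rho) * rho^n) with (rho^4 * (rho^n / (1 - rho))) by (field; lra).
  apply Rmult_le_compat_l; lra.
Qed.

Lemma geom_ratio_le rho u : 0 <= rho <= u -> u < 1 -> rho^4 / (1 - rho) <= u^4 / (1 - u).
Proof.
  intros Hr Hu. unfold Rdiv. apply Rmult_le_compat.
  - apply pow_le; lra.
  - apply Rlt_le, Rinv_0_lt_compat; lra.
  - apply pow_incr; lra.
  - apply Rinv_le_contravar; lra.
Qed.

Lemma state_seq_evalR_le b2 eps eps' : PR b2 = 0 -> 0 < Rabs b2 < 1 ->
  is_lim_seq (diff_sum eps eps' (pow b2)) 0 ->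
  forall n, Rabs (za_evalR b2 (state_seq eps eps' n)) <= Rabs b2 ^ 4 / (1 - Rabs b2).
Proof.
  intros H2 Hr L n.
  assert (T : Rabs (diff_sum eps eps' (pow b2) n) <= Rabs b2 ^ n / (1 - Rabs b2)).
  { apply (norm_le_geom_of_lim0 (V := R_NormedModule)); [lra | intro k | exact (proj1 (is_lim_seq_abs_0 _) L)].
    change (Rabs (diff_sum eps eps' (pow b2) (S k) - diff_sum eps eps' (pow b2) k) <= Rabs b2 ^ k).
    simpl diff_sum. replace (_ + _ - _) with (IZR (digit_diff eps eps' k) * b2 ^ k) by ring.
    rewrite Rabs_mult, <- RPow_abs. pose proof (digit_diff_abs eps eps' k).
    pose proof (pow_le (Rabs b2) k (Rabs_pos b2)). nra. }
  apply (le_geom_ratio _ _ _ n Hr T).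
  rewrite !RPow_abs, <- !Rabs_mult. f_equal. apply state_seq_evalR, H2.
Qed.

Lemma state_seq_evalC_le b3 eps eps' : PC b3 = 0%C -> 0 < Cmod b3 < 1 ->
  is_lim_seq (fun n => Cmod (diff_sumC eps eps' b3 n)) 0 ->
  forall n, Cmod (za_evalC b3 (state_seq eps eps' n)) <= Cmod b3 ^ 4 / (1 - Cmod b3).
Proof.
  intros H3 Hr L n.
  assert (T : Cmod (diff_sumC eps eps' b3 n) <= Cmod b3 ^ n / (1 - Cmod b3)).
  { apply (norm_le_geom_of_lim0 (V := C_NormedModule)); [lra | intro k | exact L].
    change (Cmod (diff_sumC eps eps' b3 (S k) - diff_sumC eps eps' b3 k)%C <= Cmod b3 ^ k).
    simpl diff_sumC.
    replace (_ + _ - _)%C with (RtoC (IZR (digit_diff eps eps' k)) * Cpow b3 k)%C by ring.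
    rewrite Cmod_mult, Cmod_R, Cmod_pow. pose proof (digit_diff_abs eps eps' k).
    pose proof (pow_le (Cmod b3) k (Cmod_ge_0 b3)). nra. }
  apply (le_geom_ratio _ _ _ n Hr T).
  rewrite <- !Cmod_pow, <- !Cmod_mult. f_equal. apply state_seq_evalC, H3.
Qed.

Lemma states_in_list_of_lim0 b2 x y be eps eps' : PR b2 = 0 -> PC (x, y) = 0%C ->
  conj_enclosure b2 x y -> 19/10 <= be -> PR be = 0 -> inDinf eps -> inDinf eps' ->
  is_lim_seq (diff_sum eps eps' (pow b2)) 0 ->
  is_lim_seq (fun n => Cmod (diff_sumC eps eps' (x, y) n)) 0 ->
  forall n, In (state_seq eps eps' n) state_list.
Proof.
  intros H2 H3 He Hbe Pbe D D' L2 L3.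
  pose proof (conj_enclosure_Rabs _ _ _ He) as R2. pose proof (conj_enclosure_Cmod _ _ _ He) as R3.
  apply (states_in_list (state_seq eps eps') (digit_diff eps eps'));
    [reflexivity | apply digit_diff_range | | apply za_zero_in_state_list].
  intro m. destruct (state_seq_not_alpha4 be eps eps' m Hbe Pbe D D') as [N1 N2].
  apply (bad_false_of_bounds b2 x y); auto.
  - pose proof (state_seq_evalR_le b2 eps eps' H2 ltac:(lra) L2 m).
    pose proof (geom_ratio_le (Rabs b2) (774804113216 / 1000000000000) ltac:(lra) ltac:(lra)).
    unfold K_real, scale. lra.
  - pose proof (state_seq_evalC_le (x, y) eps eps' H3 ltac:(lra) L3 m) as B.
    pose proof (geom_ratio_le (Cmod (x, y)) (818276098781 / 1000000000000) ltac:(lra) ltac:(lra)).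
    pose proof (Cmod_ge_0 (za_evalC (x, y) (state_seq eps eps' m))).
    assert (Cmod (za_evalC (x, y) (state_seq eps eps' m)) ^ 2
            <= ((818276098781 / 1000000000000) ^ 4 / (1 - 818276098781 / 1000000000000)) ^ 2)
      by (apply pow_incr; lra).
    unfold K_complex, scale. lra.
Qed.

Theorem corollary3p4 :
  forall (b2 : R) (b3 : C),
    PR b2 = 0 -> b2 < 0 ->
    PC b3 = 0%C -> 0 < Im b3 ->
  forall (l : Z) (eps eps' : nat -> bool),
    inDinf eps -> inDinf eps' ->
    (alpha_value b2 b3 l eps = alpha_value b2 b3 l eps' <->
     infinite_path b2 b3 eps eps').
Proof.
  intros b2 [x y] H2 H2neg H3 Hy l eps eps' D D'. simpl in Hy.
  destruct beta_exists as [be [Hbe Pbe]].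
  destruct (PC_root_Vieta b2 be x y H2 Pbe H2neg ltac:(lra) H3 Hy) as [Hx Hq].
  pose proof (conj_enclosure_of_Vieta b2 be x y (beta2_enclosure b2 H2 H2neg) Hbe Hx Hq) as He.
  pose proof (conj_enclosure_Rabs _ _ _ He) as R2. pose proof (conj_enclosure_Cmod _ _ _ He) as R3.
  assert (Hb2 : b2 <> 0) by lra.
  assert (Hb3 : ((x, y) : C) <> 0%C) by (intro E; apply (f_equal snd) in E; simpl in E; lra).
  rewrite alpha_value_eq_iff, infinite_path_iff_states by (auto; lra).
  split.
  - intros [L2 L3] n. apply state_list_inS; auto.
    apply (states_in_list_of_lim0 b2 x y be); auto; lra.
  - intro HS. apply diff_sums_lim0_of_states; auto; lra.
Qed.
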